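(* Let $R$ be a nontrivial tangible supersemifield, let $(q,b)$ be a quadratic pair on an $R$-module $V$, and let $x,y\in V$. (a) If $R$ is dense, then $q$ is quasilinear on $Rx+Ry$ if and only if $b(x,y)^2\le_\nu q(x)q(y)$. If this inequality fails, then $q$ is rigid at $(x,y)$. (b) If $R$ is discrete (with $\pi$ as in the context), then $q$ is quasilinear on $Rx+Ry$ if either $b(x,y)^2<_\nu \pi^{-1}q(x)q(y)$, or both $q(x),q(y)$ lie in $eR$ and $b(x,y)^2\cong_\nu \pi^{-1}q(x)q(y)$. If neither of these two conditions holds, then $q$ is $\nu$-rigid at $(x,y)$. If moreover $b(x,y)^2>_\nu \pi^{-1}q(x)q(y)$, then $q$ is rigid at $(x,y)$.
   Context: All semirings are commutative with $1$. A semiring $R$ is supertropical if $e:=1+1$ satisfies $e+e=e$ and, for all $x,y\in R$: if $ex\neq ey$ then $x+y\in\{x,y\}$, and if $ex=ey$ then $x+y=ey$. The ideal $eR$ is totally ordered by $u\le v\iff u+v=v$. For $x,y\in R$ write $x\le_\nu y$, $x\cong_\nu y$, $x<_\nu y$ for $ex\le ey$, $ex=ey$, $ex<ey$ respectively. Put $\mathcal T=R\setminus eR$ and $\mathcal G=eR\setminus\{0\}$. A tangible supersemifield is a supertropical semiring in which $\mathcal T$ is a group under multiplication, $\mathcal G$ is a group under multiplication (with identity $e$), and $e\mathcal T=\mathcal G$; it is nontrivial if $\mathcal G\neq\{e\}$. It is called discrete if $\mathcal G$ has a smallest element $c_0$ with $c_0>e$; then $\pi\in\mathcal T$ denotes an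 element with $e\pi^{-1}=c_0$. Otherwise it is called dense. A quadratic form on an $R$-module $V$ is a map $q:V\to R$ with $q(ax)=a^2q(x)$ for $a\in R,x\in V$, such that there is a symmetric bilinear form $b:V\times V\to R$ with $q(x+y)=q(x)+q(y)+b(x,y)$ for all $x,y\in V$; every such $b$ is a companion of $q$, and $(q,b)$ is a quadratic pair. $q$ is quasilinear on a submodule $W$ if $q(u+v)=q(u)+q(v)$ for all $u,v\in W$. $q$ is rigid at $(x,y)$ if $b_1(x,y)=b_2(x,y)$ for any two companions $b_1,b_2$ of $q$, and $\nu$-rigid at $(x,y)$ if $eb_1(x,y)=eb_2(x,y)$ for any two companions $b_1,b_2$. *)

From HB Require Import structures.
From mathcomp Require Import all_boot all_order all_algebra.
Set Implicit Arguments. Unset Strict Implicit. Unset Printing Implicit Defensive.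
Import GRing.Theory.
Local Open Scope ring_scope.

Section Supertropical.
Variable R : comPzSemiRingType.

Definition sr_e : R := 1 + 1.

Definition in_eR (z : R) : Prop := exists w : R, z = sr_e * w.
Definition tangible (z : R) : Prop := ~ in_eR z.
Definition ghostnz (z : R) : Prop := in_eR z /\ z <> 0.

Definition eR_le (u v : R) : Prop := u + v = v.
Definition eR_lt (u v : R) : Prop := eR_le u v /\ u <> v.

Definition nu_le (x y : R) : Prop := eR_le (sr_e * x) (sr_e * y).
Definition nu_eq (x y : R) : Prop := sr_e * x = sr_e * y.
Definition nu_lt (x y : R) : Prop := eR_lt (sr_e * x) (sr_e * y).

Definition supertropical : Prop :=
  sr_e + sr_e = sr_e /\
  (forall x y : R, sr_e * x <> sr_e * y -> x + y = x \/ x + y = y) /\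
  (forall x y : R, sr_e * x = sr_e * y -> x + y = sr_e * y).

(* tangible supersemifield: T is a multiplicative group (identity 1),
   G is a multiplicative group (identity e), and e T = G. *)
Definition tangible_supersemifield : Prop :=
  supertropical /\
  (tangible 1 /\ (forall s t, tangible s -> tangible t -> tangible (s * t)) /\
   (forall t, tangible t -> exists u, tangible u /\ t * u = 1)) /\
  (ghostnz sr_e /\ (forall g h, ghostnz g -> ghostnz h -> ghostnz (g * h)) /\
   (forall g, ghostnz g -> exists h, ghostnz h /\ g * h = sr_e)) /\
  (forall t, tangible t -> ghostnz (sr_e * t)) /\
  (forall g, ghostnz g -> exists t, tangible t /\ g = sr_e * t).

Definition sr_nontrivial : Prop := exists g, ghostnz g /\ g <> sr_e.

Definition discrete_gen (c0 : R) : Prop :=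
  ghostnz c0 /\ eR_lt sr_e c0 /\
  (forall g, ghostnz g -> eR_lt sr_e g -> eR_le c0 g).

Definition sr_discrete : Prop := exists c0, discrete_gen c0.
Definition sr_dense : Prop := ~ sr_discrete.

End Supertropical.

Section Quadratic.
Variables (R : comPzSemiRingType) (V : lSemiModType R).

Definition sym_bilinear (b : V -> V -> R) : Prop :=
  (forall u v, b u v = b v u) /\
  (forall u v w, b (u + v) w = b u w + b v w) /\
  (forall (a : R) u w, b (a *: u) w = a * b u w).

Definition companion (q : V -> R) (b : V -> V -> R) : Prop :=
  sym_bilinear b /\ (forall u v, q (u + v) = q u + q v + b u v).

Definition quadratic_pair (q : V -> R) (b : V -> V -> R) : Prop :=
  (forall (a : R) u, q (a *: u) = a ^+ 2 * q u) /\ companion q b.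

Definition span2 (x y : V) (u : V) : Prop :=
  exists a c : R, u = a *: x + c *: y.

Definition quasilinear_on (q : V -> R) (W : V -> Prop) : Prop :=
  forall u v, W u -> W v -> q (u + v) = q u + q v.

Definition rigid_at (q : V -> R) (x y : V) : Prop :=
  forall b1 b2, companion q b1 -> companion q b2 -> b1 x y = b2 x y.

Definition nu_rigid_at (q : V -> R) (x y : V) : Prop :=
  forall b1 b2, companion q b1 -> companion q b2 ->
    sr_e R * b1 x y = sr_e R * b2 x y.

End Quadratic.

From HB Require Import structures.
From mathcomp Require Import all_boot all_order all_algebra ring.
From Stdlib Require Import Classical.
Set Implicit Arguments. Unset Strict Implicit.
Import GRing.Theory.
Local Open Scope ring_scope.

(* Sums in a supertropical semiring are decided by nu-values: a strictly
   nu-larger summand absorbs the other, and nu-equal summands add up to a ghost.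
   So q is quasilinear on R x + R y as soon as every cross term a c b(x,y) is
   absorbed by a^2 q(x) + c^2 q(y); by a nu-AM-GM argument this holds when
   b(x,y)^2 <=_nu q(x) q(y), and in the discrete case also on the boundary
   nu-value c0 q(x) q(y) provided q(x), q(y) are ghosts, since nothing lies
   strictly between e and c0.  Conversely, when b(x,y)^2 exceeds q(x) q(y) by a
   factor c > e (such c exists by density, resp. c = c0), there is a tangible
   al for which the cross term al b(x,y) strictly dominates al^2 q(x) + q(y) in
   q(al x + y); that term is then determined by q, which fixes b(x,y) for every
   companion and contradicts quasilinearity.  On the discrete boundary with
   q(x) tangible, comparing q(al x + y) for two companions fixes the nu-value
   of b(x,y). *)

Section Supertropical.
Variable R : comPzSemiRingType.
Hypothesis ST : supertropical R.
Local Notation e := (sr_e R).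
Local Notation le := (@eR_le R).
Local Notation lt := (@eR_lt R).
Implicit Types u v w x y z : R.

Definition ghost u := e * u = u.
Definition absorbs z w := z + w = z.

Lemma mulee : e * e = e.
Proof. by rewrite {1}/sr_e mulrDl mul1r; case: ST. Qed.

Lemma muleK x : e * (e * x) = e * x.
Proof. by rewrite mulrA mulee. Qed.

Lemma addrr_nu x : x + x = e * x.
Proof. by rewrite /sr_e mulrDl mul1r. Qed.

Lemma mul_nu x y : e * x * (e * y) = e * (x * y).
Proof. by rewrite mulrACA mulee. Qed.

Lemma nu_sqr x : e * x ^+ 2 = e * x * (e * x).
Proof. by rewrite mul_nu expr2. Qed.

Lemma ghost_nu x : ghost (e * x).
Proof. exact: muleK. Qed.

Lemma ghost_e : ghost e.
Proof. exact: mulee. Qed.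

Lemma ghostMr u v : ghost u -> ghost (u * v).
Proof. by rewrite /ghost mulrA => ->. Qed.

Lemma ghostMl u v : ghost u -> ghost (v * u).
Proof. by rewrite mulrC; apply: ghostMr. Qed.

Lemma ghostD u v : ghost u -> ghost v -> ghost (u + v).
Proof. by rewrite /ghost mulrDr => -> ->. Qed.

Lemma ghost_mulre u : ghost u -> u * e = u.
Proof. by rewrite mulrC. Qed.

Lemma in_eR_ghost u : in_eR u <-> ghost u.
Proof. by split=> [[w ->]|gu]; [apply: ghost_nu | exists u]. Qed.

Lemma eR_le_refl u : ghost u -> le u u.
Proof. by rewrite /eR_le addrr_nu. Qed.

Lemma eR_le_trans u v w : le u v -> le v w -> le u w.
Proof. by rewrite /eR_le => uv vw; rewrite -vw addrA uv. Qed.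

Lemma eR_le_anti u v : le u v -> le v u -> u = v.
Proof. by rewrite /eR_le => uv vu; rewrite -uv addrC vu. Qed.

Lemma eR_le_total u v : ghost u -> ghost v -> le u v \/ le v u.
Proof.
move=> gu gv; have [->|neq_uv] := eqVneq u v; first by left; apply: eR_le_refl.
case: ST => _ [tropical _]; case: (tropical u v); first by rewrite gu gv; apply/eqP.
  by right; rewrite /eR_le addrC.
by left.
Qed.

Lemma eR_leM2l u v w : le u v -> le (w * u) (w * v).
Proof. by rewrite /eR_le -mulrDr => ->. Qed.

Lemma eR_le0x u : le 0 u.
Proof. by rewrite /eR_le add0r. Qed.

Lemma eR_le_addl u v : ghost u -> le u (u + v).
Proof. by move=> gu; rewrite /eR_le addrA addrr_nu gu. Qed.

Lemma eR_le_addr u v : ghost v -> le v (u + v).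
Proof. by move=> gv; rewrite addrC; apply: eR_le_addl. Qed.

Lemma eR_ltW u v : lt u v -> le u v.
Proof. by case. Qed.

Lemma eR_lt_geF u v : lt u v -> le v u -> False.
Proof. by case=> uv neq_uv vu; apply: neq_uv; apply: eR_le_anti. Qed.

Lemma eR_ltxx u : lt u u -> False.
Proof. by case. Qed.

Lemma eR_lt_le_trans u v w : lt u v -> le v w -> lt u w.
Proof.
case=> uv neq_uv vw; split; first exact: eR_le_trans vw.
by move=> eq_uw; subst w; apply: neq_uv; apply: eR_le_anti.
Qed.

Lemma eR_le_lt_trans u v w : le u v -> lt v w -> lt u w.
Proof.
move=> uv [vw neq_vw]; split; first exact: eR_le_trans vw.
by move=> eq_uw; subst w; apply: neq_vw; apply: eR_le_anti.
Qed.

Lemma eR_lt_neq0 u v : lt u v -> v <> 0.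
Proof. by case=> uv neq_uv v0; apply: neq_uv; move: uv; rewrite v0 /eR_le addr0. Qed.

Lemma eR_ltNge u v : ghost u -> ghost v -> ~ le v u -> lt u v.
Proof.
move=> gu gv nvu; have [uv|] := eR_le_total gu gv; last by [].
by split=> // eq_uv; apply: nvu; rewrite eq_uv; apply: eR_le_refl.
Qed.

Lemma eR_ltD u v w : ghost u -> ghost v -> lt u w -> lt v w -> lt (u + v) w.
Proof. by move=> gu gv uw vw; case: (eR_le_total gu gv) => uv; rewrite ?uv // addrC uv. Qed.

Lemma absorbs_nu_lt z w : lt (e * w) (e * z) -> absorbs z w.
Proof.
case=> le_wz neq_wz; case: ST => _ [tropical _].
case: (tropical w z) => // [eq_wz|]; last by rewrite /absorbs addrC.
by exfalso; apply: neq_wz; rewrite -le_wz -mulrDr eq_wz.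
Qed.

Lemma addr_nu_eq w z : e * w = e * z -> w + z = e * z.
Proof. by case: ST => _ [_ nu_eq_case]; apply: nu_eq_case. Qed.

Lemma absorbs_ghost z w : ghost z -> le (e * w) (e * z) -> absorbs z w.
Proof.
move=> gz le_wz; have [eq_wz|neq_wz] := eqVneq (e * w) (e * z).
  by rewrite /absorbs addrC addr_nu_eq // gz.
by apply: absorbs_nu_lt; split => //; apply/eqP.
Qed.

Lemma absorbs_addr z w r : absorbs z w -> absorbs (z + r) w.
Proof. by rewrite /absorbs => zw; rewrite addrAC zw. Qed.

Lemma absorbs_trans z w t : absorbs z w -> absorbs t z -> absorbs t w.
Proof. by rewrite /absorbs => zw tz; rewrite -{1}tz -addrA zw tz. Qed.

Lemma absorbsD z w1 w2 : absorbs z w1 -> absorbs z w2 -> absorbs z (w1 + w2).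
Proof. by rewrite /absorbs => zw1 zw2; rewrite addrA zw1 zw2. Qed.

Lemma absorbsM z w k : absorbs z w -> absorbs (k * z) (k * w).
Proof. by rewrite /absorbs -mulrDr => ->. Qed.

Lemma addr_nu_lt_cancel s w w' : lt (e * s) (e * w) -> s + w' = s + w -> w' = w.
Proof.
move=> sw; have -> : s + w = w by rewrite addrC; apply: absorbs_nu_lt.
move=> sw'_w; have [w's|] := classic (le (e * w') (e * s)).
  exfalso; case: sw => _; apply; rewrite -sw'_w mulrDr addrC.
  by rewrite w's.
move=> /(eR_ltNge (ghost_nu s) (ghost_nu w')) sw'.
by rewrite -sw'_w addrC (absorbs_nu_lt sw').
Qed.

Section TangibleSupersemifield.
Hypothesis TS : tangible_supersemifield R.
Implicit Types g h c t : R.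

Lemma ghostnzP g : ghostnz g <-> ghost g /\ g <> 0.
Proof. by rewrite /ghostnz in_eR_ghost. Qed.

Lemma ghostnz_ghost g : ghostnz g -> ghost g.
Proof. by case/ghostnzP. Qed.

Lemma ghostnz_neq0 g : ghostnz g -> g <> 0.
Proof. by case/ghostnzP. Qed.

Lemma ghostnzM g h : ghostnz g -> ghostnz h -> ghostnz (g * h).
Proof. by case: TS => _ [_ [[_ [mulG _]] _]]; apply: mulG. Qed.

Lemma ghostnz_inv g : ghostnz g -> exists h, ghostnz h /\ g * h = e.
Proof. by case: TS => _ [_ [[_ [_ invG]] _]]; apply: invG. Qed.

Lemma ghostnz_nu_tangible t : tangible t -> ghostnz (e * t).
Proof. by case: TS => _ [_ [_ [nuT _]]]; apply: nuT. Qed.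

Lemma ghostnz_lift g : ghostnz g -> exists t, tangible t /\ g = e * t.
Proof. by case: TS => _ [_ [_ [_ liftG]]]; apply: liftG. Qed.

Lemma tangibleM s t : tangible s -> tangible t -> tangible (s * t).
Proof. by case: TS => _ [[_ [mulT _]] _]; apply: mulT. Qed.

Lemma tangible_inv t : tangible t -> exists u, t * u = 1.
Proof. by case: TS => _ [[_ [_ invT]] _] /invT [u [_ tu]]; exists u. Qed.

Lemma ghostnz_nu x : x <> 0 -> ghostnz (e * x).
Proof.
move=> x0; have [/in_eR_ghost gx|] := classic (in_eR x); last exact: ghostnz_nu_tangible.
by rewrite gx; apply/ghostnzP.
Qed.

Lemma ghostnz_of_gt u v : ghost v -> lt u v -> ghostnz v.
Proof. by move=> gv uv; apply/ghostnzP; split=> //; apply: eR_lt_neq0 uv. Qed.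

Lemma ghostnz_mulI g u v : ghostnz g -> ghost u -> ghost v -> g * u = g * v -> u = v.
Proof.
move=> /ghostnz_inv [h [_ gh_e]] gu gv eq_guv.
by rewrite -gu -gv -gh_e mulrAC [in RHS]mulrAC eq_guv.
Qed.

Lemma eR_ltM2l g u v : ghostnz g -> ghost u -> ghost v -> lt u v -> lt (g * u) (g * v).
Proof.
move=> gg gu gv [uv neq_uv]; split; first exact: eR_leM2l.
by move=> eq_guv; apply: neq_uv; apply: (ghostnz_mulI gg).
Qed.

Lemma eR_lt_sqr u v : ghost u -> ghost v -> lt u v -> lt (u * u) (v * v).
Proof.
move=> gu gv uv; apply: eR_le_lt_trans (eR_leM2l u (eR_ltW uv)) _.
by rewrite mulrC; apply: eR_ltM2l => //; apply: ghostnz_of_gt uv.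
Qed.

Lemma eR_le_of_sqr u v : ghost u -> ghost v -> le (u * u) (v * v) -> le u v.
Proof.
move=> gu gv uuvv; apply: NNPP => /(eR_ltNge gv gu) vu.
exact: eR_lt_geF (eR_lt_sqr gv gu vu) uuvv.
Qed.

Lemma tangible_mulI t u v : tangible t -> t * u = t * v -> u = v.
Proof.
move=> /tangible_inv [ti t_ti] tu_tv.
by rewrite -[u]mul1r -[v]mul1r -t_ti mulrAC tu_tv mulrAC.
Qed.

Lemma eR_lt_of_sqr_le_mul u v w : ghost u -> ghost v -> ghost w ->
  lt u v -> le (w * w) (u * v) -> lt w v.
Proof.
move=> gu gv gw uv wwuv; have gnv := ghostnz_of_gt gv uv.
have vuvv : lt (v * u) (v * v) by apply: eR_ltM2l.
split=> [|eq_wv].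
  apply: eR_le_of_sqr => //; apply: eR_le_trans wwuv _.
  by rewrite mulrC; apply: eR_ltW.
by subst w; apply: (eR_lt_geF vuvv); rewrite [v * u]mulrC.
Qed.

Lemma absorbs_of_nu_sqr_le u v w :
  le (e * w * (e * w)) (e * u * (e * v)) -> absorbs (u + v) w.
Proof.
wlog uv : u v / le (e * u) (e * v).
  move=> hwlog; have [|vu] := eR_le_total (ghost_nu u) (ghost_nu v); first exact: hwlog.
  by rewrite addrC [e * u * _]mulrC; apply: hwlog.
move=> wwuv; have [eq_uv|neq_uv] := eqVneq (e * u) (e * v).
  rewrite /absorbs (addr_nu_eq eq_uv); apply: absorbs_ghost; first exact: ghost_nu.
  rewrite muleK; apply: eR_le_of_sqr; try exact: ghost_nu.
  by rewrite eq_uv in wwuv.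
have lt_uv : lt (e * u) (e * v) by split=> //; apply/eqP.
have -> : u + v = v by rewrite addrC; apply: absorbs_nu_lt.
by apply: absorbs_nu_lt; apply: (eR_lt_of_sqr_le_mul (ghost_nu u) (ghost_nu v) (ghost_nu w)).
Qed.

Lemma absorbs_sqrD a a' : absorbs (a ^+ 2 + a' ^+ 2) (e * a * a').
Proof.
have nu_cross : e * (e * a * a') = e * a * (e * a') by rewrite mul_nu -mulrA muleK.
apply: absorbs_of_nu_sqr_le; rewrite nu_cross !nu_sqr.
set A := e * a; set A' := e * a'.
have -> : A * A' * (A * A') = A * A * (A' * A') by ring.
by apply/eR_le_refl/ghostMr/ghostMr/ghost_nu.
Qed.

Lemma discrete_gap c0 h g :
  discrete_gen c0 -> ghostnz h -> ghost g -> lt h g -> le (c0 * h) g.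
Proof.
move=> [_ [_ c0_min]] gnh gg hg; have [hi [gnhi h_hi]] := ghostnz_inv gnh.
have e_lt : lt e (g * hi).
  by have := eR_ltM2l gnhi (ghostnz_ghost gnh) gg hg; rewrite mulrC h_hi mulrC.
have := eR_leM2l h (c0_min _ (ghostnzM (ghostnz_of_gt gg hg) gnhi) e_lt).
by rewrite mulrCA h_hi ghost_mulre // mulrC.
Qed.

Lemma discrete_le_of_lt c0 u v :
  discrete_gen c0 -> ghost u -> ghost v -> lt v (c0 * u) -> le v u.
Proof.
move=> dc0 gu gv vc0u; apply: NNPP => nvu; have uv := eR_ltNge gu gv nvu.
have gnu : ghostnz u.
  by apply/ghostnzP; split=> // u0; apply: (eR_lt_neq0 vc0u); rewrite u0 mulr0.
exact: (eR_lt_geF vc0u (discrete_gap dc0 gnu gv uv)).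
Qed.

Lemma absorbs_of_nu_sqr_discrete c0 u v w : discrete_gen c0 -> ghost u -> ghost v ->
  e * w * (e * w) = c0 * (u * v) -> absorbs (u + v) w.
Proof.
move=> dc0; wlog uv : u v / le u v.
  move=> hwlog gu gv; have [|vu] := eR_le_total gu gv; first by move=> uv; apply: hwlog.
  by rewrite addrC [u * v]mulrC; apply: hwlog.
move=> gu gv wwuv; rewrite /absorbs uv; apply: absorbs_ghost => //; rewrite gv.
apply: NNPP => nvw; have gw := ghost_nu w; have vw := eR_ltNge gv gw nvw.
set W := e * w in wwuv gw vw; have gnW := ghostnz_of_gt gw vw.
have gnv : ghostnz v.
  apply/ghostnzP; split=> // v0; apply: (ghostnz_neq0 (ghostnzM gnW gnW)).
  by rewrite wwuv v0 !mulr0.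
have gnc0v := ghostnzM dc0.1 gnv.
(* c0 v u <= c0 v v < c0 v W <= W W = c0 v u *)
suff : lt (c0 * v * u) (W * W) by rewrite wwuv [u * v]mulrC mulrA => /eR_ltxx.
apply: eR_le_lt_trans (eR_leM2l (c0 * v) uv) _.
apply: eR_lt_le_trans (eR_ltM2l gnc0v gv gw vw) _.
by rewrite mulrC; apply/eR_leM2l/discrete_gap.
Qed.

Lemma exists_ghost_gt_e : sr_nontrivial R -> exists c, ghostnz c /\ lt e c.
Proof.
move=> [g [gng neq_ge]]; have gg := ghostnz_ghost gng.
have [eg|ge] := eR_le_total ghost_e gg.
  by exists g; split=> //; split=> // eq_eg; apply: neq_ge.
have [gi [gngi g_gi]] := ghostnz_inv gng.
exists gi; split=> //; have := eR_ltM2l gngi gg ghost_e (conj ge neq_ge).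
by rewrite mulrC g_gi ghost_mulre //; apply: ghostnz_ghost.
Qed.

Lemma dense_exists_gap u v : sr_dense R -> sr_nontrivial R ->
  ghost u -> ghost v -> lt u v -> exists c, ghostnz c /\ lt e c /\ lt (c * u) v.
Proof.
move=> dense ntriv gu gv uv; have [u0|u0] := eqVneq u 0.
  by have [c [gnc ec]] := exists_ghost_gt_e ntriv; exists c; rewrite u0 mulr0 -u0.
have gnu : ghostnz u by apply/ghostnzP; split=> //; apply/eqP.
have [ui [gnui u_ui]] := ghostnz_inv gnu.
have gnL := ghostnzM (ghostnz_of_gt gv uv) gnui.
have Lu : v * ui * u = v by rewrite -mulrA [ui * u]mulrC u_ui ghost_mulre.
have eL : lt e (v * ui) by have := eR_ltM2l gnui gu gv uv; rewrite mulrC u_ui mulrC.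
(* Otherwise v u^-1 would be the least element of G above e. *)
apply: NNPP => none; apply: dense; exists (v * ui); split=> //; split=> // g gng eg.
apply: NNPP => nLg; apply: none; exists g; split=> //; split=> //.
have gL := eR_ltNge (ghostnz_ghost gng) (ghostnz_ghost gnL) nLg.
have := eR_ltM2l gnu (ghostnz_ghost gng) (ghostnz_ghost gnL) gL.
by rewrite ![u * _]mulrC Lu.
Qed.

Lemma ghost_between c X Y B : ghostnz c -> lt e c -> ghost X -> ghost Y -> ghostnz B ->
  lt (c * (X * Y)) (B * B) -> exists A, ghostnz A /\ lt (A * X) B /\ lt Y (A * B).
Proof.
move=> gnc ec gX gY gnB cXY_BB; have gB := ghostnz_ghost gnB.
have [Bi [gnBi B_Bi]] := ghostnz_inv gnB.
(* A := c (Y + B) / B if X = 0, and A := B / (c X) otherwise. *)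
have [X0|X0] := eqVneq X 0.
  have gnM : ghostnz (Y + B).
    apply/ghostnzP; split; first exact: ghostD.
    by move=> M0; apply: (ghostnz_neq0 gnB); have := eR_le_addr Y gB; rewrite M0 /eR_le addr0.
  exists (c * (Y + B) * Bi); split; first exact/ghostnzM/gnBi/ghostnzM.
  rewrite X0 mulr0 -mulrA [Bi * B]mulrC B_Bi ghost_mulre; last exact/ghostMl/ghostnz_ghost.
  split; first by split; [apply: eR_le0x | move=> B0; apply: (ghostnz_neq0 gnB)].
  apply: eR_le_lt_trans (eR_le_addl B gY) _.
  have := eR_ltM2l gnM ghost_e (ghostnz_ghost gnc) ec.
  by rewrite mulrC (ghostnz_ghost gnM) mulrC.
have gnX : ghostnz X by apply/ghostnzP; split=> //; apply/eqP.
have [Xi [gnXi X_Xi]] := ghostnz_inv gnX.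
have [ci [gnci c_ci]] := ghostnz_inv gnc.
have gnXici := ghostnzM gnXi gnci.
exists (B * Xi * ci); split; first exact/ghostnzM/gnci/ghostnzM.
split.
  have cie : lt ci e.
    have := eR_ltM2l gnci ghost_e (ghostnz_ghost gnc) ec.
    by rewrite [ci * c]mulrC c_ci (ghost_mulre (ghostnz_ghost gnci)).
  have -> : B * Xi * ci * X = B * ci * (X * Xi) by ring.
  rewrite X_Xi (ghost_mulre (ghostMr ci gB)).
  by have := eR_ltM2l gnB (ghostnz_ghost gnci) ghost_e cie; rewrite (ghost_mulre gB).
have -> : Y = Xi * ci * (c * (X * Y)).
  have -> : Xi * ci * (c * (X * Y)) = c * ci * (X * Xi) * Y by ring.
  by rewrite c_ci X_Xi mulee gY.
have -> : B * Xi * ci * B = Xi * ci * (B * B) by ring.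
by apply: eR_ltM2l cXY_BB; [| apply/ghostMl/ghostMl | apply/ghostMr].
Qed.

Section QuadraticForms.
Variable V : lSemiModType R.
Implicit Types (q : V -> R) (b : V -> V -> R).

Lemma sym_bilinearC b (x y : V) : sym_bilinear b -> b y x = b x y.
Proof. by case=> bC _; apply: bC. Qed.

Lemma sym_bilinearDr b (u v w : V) : sym_bilinear b -> b u (v + w) = b u v + b u w.
Proof. by case=> bC [bD _]; rewrite bC bD !(bC u). Qed.

Lemma sym_bilinearZr b a (u v : V) : sym_bilinear b -> b u (a *: v) = a * b u v.
Proof. by case=> bC [_ bZ]; rewrite bC bZ bC. Qed.

Lemma sym_bilinear_span2 b (x y : V) a c a' c' : sym_bilinear b ->
  b (a *: x + c *: y) (a' *: x + c' *: y) =
  a * a' * b x x + a * c' * b x y + a' * c * b x y + c * c' * b y y.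
Proof.
move=> bb; have [bC [bD bZ]] := bb.
rewrite bD !bZ !sym_bilinearDr // !sym_bilinearZr // (bC y x); ring.
Qed.

Lemma quadratic_pair_span2 q b (x y : V) a c : quadratic_pair q b ->
  q (a *: x + c *: y) = a ^+ 2 * q x + c ^+ 2 * q y + a * c * b x y.
Proof.
move=> [qZ [bb qD]]; have [_ [_ bZ]] := bb.
by rewrite qD !qZ bZ sym_bilinearZr // mulrA.
Qed.

Lemma absorbs_nu_quadratic q b (x : V) : quadratic_pair q b -> absorbs (e * q x) (b x x).
Proof.
move=> [qZ [_ qD]]; have := qZ (1 + 1) x.
by rewrite scalerDl scale1r qD addrr_nu -/(sr_e R) expr2 mulee.
Qed.

Lemma quasilinear_of_cross_absorbs q b (x y : V) : quadratic_pair q b ->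
  (forall a c, absorbs (a ^+ 2 * q x + c ^+ 2 * q y) (a * c * b x y)) ->
  quasilinear_on q (span2 x y).
Proof.
move=> qb cross _ _ [a [c ->]] [a' [c' ->]]; have [_ [bb qD]] := qb.
rewrite qD !(quadratic_pair_span2 x y _ _ qb) sym_bilinear_span2 //.
set X1 := a ^+ 2 * q x; set Y1 := c ^+ 2 * q y; set B1 := a * c * b x y.
set X2 := a' ^+ 2 * q x; set Y2 := c' ^+ 2 * q y; set B2 := a' * c' * b x y.
have diag (z : V) (d d' : R) : absorbs ((d ^+ 2 + d' ^+ 2) * q z) (d * d' * b z z).
  apply: absorbs_trans (absorbsM (d * d') (absorbs_nu_quadratic z qb)) _.
  have -> : d * d' * (e * q z) = q z * (e * d * d') by ring.
  by rewrite mulrC; apply/absorbsM/absorbs_sqrD.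
apply: absorbsD; [apply: absorbsD; [apply: absorbsD|]|].
- have -> : X1 + Y1 + B1 + (X2 + Y2 + B2) =
      (a ^+ 2 + a' ^+ 2) * q x + (Y1 + B1 + Y2 + B2) by rewrite /X1 /X2; ring.
  exact/absorbs_addr/diag.
- have -> : X1 + Y1 + B1 + (X2 + Y2 + B2) = X1 + Y2 + (Y1 + B1 + X2 + B2) by ring.
  exact/absorbs_addr/cross.
- have -> : X1 + Y1 + B1 + (X2 + Y2 + B2) = X2 + Y1 + (X1 + B1 + Y2 + B2) by ring.
  exact/absorbs_addr/cross.
- have -> : X1 + Y1 + B1 + (X2 + Y2 + B2) =
      (c ^+ 2 + c' ^+ 2) * q y + (X1 + B1 + X2 + B2) by rewrite /Y1 /Y2; ring.
  exact/absorbs_addr/diag.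
Qed.

(* In [q (al x + y) = al^2 q x + q y + al b x y] the last term then strictly
   dominates, so it is determined by [q] alone. *)
Definition cross_term_dominant q b (x y : V) al :=
  tangible al /\ lt (e * (al ^+ 2 * q x)) (e * (al * b x y)) /\
  lt (e * q y) (e * (al * b x y)).

Lemma cross_term_dominantP q b (x y : V) al : cross_term_dominant q b x y al ->
  lt (e * (al ^+ 2 * q x + q y)) (e * (al * b x y)).
Proof. by case=> _ [ltx lty]; rewrite mulrDr; apply: eR_ltD => //; apply: ghost_nu. Qed.

Lemma companion_cross_eq q b b' (x y : V) al : quadratic_pair q b -> companion q b' ->
  al ^+ 2 * q x + q y + al * b' x y = al ^+ 2 * q x + q y + al * b x y.
Proof.
move=> qb cb'; have qb' : quadratic_pair q b' by split; [exact: qb.1 | exact: cb'].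
have := quadratic_pair_span2 x y al 1 qb'.
by rewrite (quadratic_pair_span2 x y al 1 qb) expr1n !mul1r !mulr1.
Qed.

Lemma companion_eq_of_dominant q b b' (x y : V) al : quadratic_pair q b ->
  cross_term_dominant q b x y al -> companion q b' -> b' x y = b x y.
Proof.
move=> qb dom /(companion_cross_eq x y al qb).
move/(addr_nu_lt_cancel (cross_term_dominantP dom)).
by apply: tangible_mulI; case: dom.
Qed.

Lemma rigid_at_of_dominant q b (x y : V) al : quadratic_pair q b ->
  cross_term_dominant q b x y al -> rigid_at q x y.
Proof.
move=> qb dom b1 b2 cb1 cb2.
by rewrite (companion_eq_of_dominant qb dom cb1) (companion_eq_of_dominant qb dom cb2).
Qed.

Lemma not_quasilinear_of_dominant q b (x y : V) al : quadratic_pair q b ->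
  cross_term_dominant q b x y al -> ~ quasilinear_on q (span2 x y).
Proof.
move=> qb dom ql; have domP := cross_term_dominantP dom.
have inx : span2 x y (al *: x) by exists al, 0; rewrite scale0r addr0.
have iny : span2 x y (1 *: y) by exists 0, 1; rewrite scale0r add0r.
have := ql _ _ inx iny.
rewrite (quadratic_pair_span2 x y al 1 qb) !qb.1 expr1n !mul1r mulr1.
rewrite addrC (absorbs_nu_lt domP) => eq_cross.
by case: domP => _; rewrite eq_cross.
Qed.

Lemma dominant_of_nu_gap q b (x y : V) c : ghostnz c -> lt e c ->
  lt (c * (e * (q x * q y))) (e * b x y ^+ 2) ->
  exists al, cross_term_dominant q b x y al.
Proof.
move=> gnc ec gap; have gnB : ghostnz (e * b x y).
  apply: ghostnz_nu => b0; apply: (eR_lt_neq0 gap).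
  by rewrite b0 expr2 !mulr0.
have [|A [gnA [AX_B Y_AB]]] := ghost_between gnc ec (ghost_nu (q x)) (ghost_nu (q y)) gnB.
  by rewrite mul_nu -nu_sqr.
have [al [tal A_al]] := ghostnz_lift gnA.
exists al; split=> //; rewrite -!mul_nu -A_al -mulrA; split=> //.
exact: eR_ltM2l gnA (ghostMl A (ghost_nu (q x))) (ghost_nu (b x y)) AX_B.
Qed.

Lemma rigid_at_of_nu_gap q b (x y : V) c : quadratic_pair q b -> ghostnz c -> lt e c ->
  lt (c * (e * (q x * q y))) (e * b x y ^+ 2) -> rigid_at q x y.
Proof.
move=> qb gnc ec /(dominant_of_nu_gap gnc ec) [al dom].
exact: rigid_at_of_dominant qb dom.
Qed.

Lemma dominant_of_dense q b (x y : V) : sr_dense R -> sr_nontrivial R ->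
  ~ nu_le (b x y ^+ 2) (q x * q y) -> exists al, cross_term_dominant q b x y al.
Proof.
move=> dense ntriv /(eR_ltNge (ghost_nu _) (ghost_nu _)) gap.
have [c [gnc [ec cgap]]] := dense_exists_gap dense ntriv (ghost_nu _) (ghost_nu _) gap.
exact: dominant_of_nu_gap gnc ec cgap.
Qed.

Lemma quasilinear_of_nu_le q b (x y : V) : quadratic_pair q b ->
  nu_le (b x y ^+ 2) (q x * q y) -> quasilinear_on q (span2 x y).
Proof.
move=> qb le_bq; apply: (quasilinear_of_cross_absorbs qb) => a c.
apply: absorbs_of_nu_sqr_le; rewrite !mul_nu.
have -> : a * c * b x y * (a * c * b x y) = (a * c) ^+ 2 * b x y ^+ 2 by ring.
have -> : a ^+ 2 * q x * (c ^+ 2 * q y) = (a * c) ^+ 2 * (q x * q y) by ring.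
by rewrite mulrCA [e * (_ * (q x * q y))]mulrCA; apply: eR_leM2l.
Qed.

Lemma quasilinear_of_ghost_boundary q b (x y : V) c0 : quadratic_pair q b ->
  discrete_gen c0 -> ghost (q x) -> ghost (q y) ->
  e * b x y ^+ 2 = c0 * (e * (q x * q y)) -> quasilinear_on q (span2 x y).
Proof.
move=> qb dc0 gx gy bd; apply: (quasilinear_of_cross_absorbs qb) => a c.
apply: (absorbs_of_nu_sqr_discrete dc0); [exact: ghostMl | exact: ghostMl |].
rewrite mul_nu.
have -> : a * c * b x y * (a * c * b x y) = (a * c) ^+ 2 * b x y ^+ 2 by ring.
by rewrite mulrCA bd (ghostMr (q y) gx); ring.
Qed.

Lemma companion_nu_ge_of_boundary q b b' (x y : V) c0 : quadratic_pair q b ->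
  companion q b' -> discrete_gen c0 -> tangible (q x) ->
  e * b x y ^+ 2 = c0 * (e * (q x * q y)) -> le (e * b x y) (e * b' x y).
Proof.
move=> qb cb' [gnc0 [ec0 _]] tx bd; rewrite nu_sqr -mul_nu in bd.
have gB := ghost_nu (b x y); have gB' := ghost_nu (b' x y); have gY := ghost_nu (q y).
apply: NNPP => /(eR_ltNge gB' gB) B'B; have gnB := ghostnz_of_gt gB B'B.
have gnY : ghostnz (e * q y).
  apply/ghostnzP; split=> // Y0; apply: (ghostnz_neq0 (ghostnzM gnB gnB)).
  by rewrite bd Y0 !mulr0.
have gnX := ghostnz_nu_tangible tx; have [Xi [gnXi X_Xi]] := ghostnz_inv gnX.
(* Choose al with nu al = nu (b x y) / nu (q x): then al^2 q x and al b x y have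
   the same nu-value, al b' x y lies strictly below it, and so does q y. *)
have [al [tal A_al]] := ghostnz_lift (ghostnzM gnB gnXi).
have gnA : ghostnz (e * al) by rewrite -A_al; apply: ghostnzM.
have AX : e * al * (e * q x) = e * b x y.
  by rewrite -A_al -mulrA [Xi * _]mulrC X_Xi ghost_mulre.
have nu_sqr_term : e * (al ^+ 2 * q x) = e * al * (e * b x y).
  by rewrite -mul_nu nu_sqr -mulrA AX.
have nu_cross : e * (al * b x y) = e * al * (e * b x y) by rewrite mul_nu.
have Y_lt : lt (e * q y) (e * (al ^+ 2 * q x)).
  have -> : e * (al ^+ 2 * q x) = e * q y * c0.
    rewrite nu_sqr_term -A_al.
    have -> : e * b x y * Xi * (e * b x y) = e * b x y * (e * b x y) * Xi by ring.
    rewrite bd.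
    have -> : c0 * (e * q x * (e * q y)) * Xi = c0 * (e * q x * Xi) * (e * q y) by ring.
    by rewrite X_Xi (ghost_mulre (ghostnz_ghost gnc0)) mulrC.
  by have := eR_ltM2l gnY ghost_e (ghostnz_ghost gnc0) ec0; rewrite ghost_mulre.
have := companion_cross_eq x y al qb cb'.
rewrite (absorbs_nu_lt Y_lt) (addr_nu_eq (etrans nu_sqr_term (esym nu_cross))).
rewrite (absorbs_nu_lt _); last first.
  by rewrite nu_sqr_term -mul_nu; apply: eR_ltM2l.
move=> tangible_eq_ghost; apply: (tangibleM (tangibleM tal tal) tx).
by rewrite -expr2 tangible_eq_ghost; exists (al * b x y).
Qed.

Lemma companion_nu_eq_of_boundary q b b' (x y : V) c0 : quadratic_pair q b ->
  companion q b' -> discrete_gen c0 -> tangible (q x) ->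
  e * b x y ^+ 2 = c0 * (e * (q x * q y)) -> e * b' x y = e * b x y.
Proof.
move=> qb cb' dc0 tx bd; have qb' : quadratic_pair q b' by split; [exact: qb.1 | exact: cb'].
have BB' := companion_nu_ge_of_boundary qb cb' dc0 tx bd.
apply: NNPP => neq_BB'; have B_B' : lt (e * b x y) (e * b' x y) by split=> // /esym.
have gap : lt (c0 * (e * (q x * q y))) (e * b' x y ^+ 2).
  by rewrite -bd !nu_sqr; apply: eR_lt_sqr => //; apply: ghost_nu.
have [al dom] := dominant_of_nu_gap dc0.1 dc0.2.1 gap.
by apply: neq_BB'; rewrite (companion_eq_of_dominant qb' dom qb.2).
Qed.

Lemma nu_rigid_at_of_boundary q b (x y : V) c0 : quadratic_pair q b ->
  discrete_gen c0 -> tangible (q x) ->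
  e * b x y ^+ 2 = c0 * (e * (q x * q y)) -> nu_rigid_at q x y.
Proof.
move=> qb dc0 tx bd b1 b2 cb1 cb2.
by rewrite !(companion_nu_eq_of_boundary qb _ dc0 tx bd).
Qed.

Lemma nu_rigid_atC q (x y : V) : nu_rigid_at q y x -> nu_rigid_at q x y.
Proof.
move=> rigid_yx b1 b2 cb1 cb2.
by rewrite -(sym_bilinearC _ _ cb1.1) -(sym_bilinearC _ _ cb2.1); apply: rigid_yx.
Qed.

Lemma nu_rigid_at_discrete q b (x y : V) c0 : quadratic_pair q b -> discrete_gen c0 ->
  ~ lt (e * b x y ^+ 2) (c0 * (e * (q x * q y))) ->
  ~ (in_eR (q x) /\ in_eR (q y) /\ e * b x y ^+ 2 = c0 * (e * (q x * q y))) ->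
  nu_rigid_at q x y.
Proof.
move=> qb dc0 not_lt not_ghost_boundary.
have gQ : ghost (c0 * (e * (q x * q y))) by apply/ghostMr/ghostnz_ghost/dc0.1.
have [bd|not_bd] := classic (e * b x y ^+ 2 = c0 * (e * (q x * q y))).
  have [ex|tx] := classic (in_eR (q x)); last exact: nu_rigid_at_of_boundary qb dc0 tx bd.
  have ty : tangible (q y) by move=> ey; apply: not_ghost_boundary.
  apply/nu_rigid_atC/(nu_rigid_at_of_boundary qb dc0 ty).
  by rewrite (sym_bilinearC _ _ qb.2.1) [q y * _]mulrC.
move=> b1 b2 cb1 cb2; congr (e * _); apply: (rigid_at_of_nu_gap qb dc0.1 dc0.2.1) => //.
by apply: eR_ltNge gQ (ghost_nu _) _ => le_bQ; apply: not_lt; split.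
Qed.

End QuadraticForms.
End TangibleSupersemifield.
End Supertropical.

Unset Implicit Arguments.
Set Strict Implicit.

Theorem theorem1p5 (R : comPzSemiRingType) (V : lSemiModType R)
    (q : V -> R) (b : V -> V -> R) (x y : V) :
  tangible_supersemifield R -> sr_nontrivial R -> quadratic_pair q b ->
  (* (a) dense case *)
  (sr_dense R ->
     (quasilinear_on q (span2 x y) <-> nu_le (b x y ^+ 2) (q x * q y)) /\
     (~ nu_le (b x y ^+ 2) (q x * q y) -> rigid_at q x y)) /\
  (* (b) discrete case; pinv = pi^{-1} *)
  (forall (c0 pi pinv : R),
     discrete_gen c0 -> tangible pi -> pi * pinv = 1 -> sr_e R * pinv = c0 ->
     ((nu_lt (b x y ^+ 2) (pinv * (q x * q y)) \/
       (in_eR (q x) /\ in_eR (q y) /\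
        nu_eq (b x y ^+ 2) (pinv * (q x * q y)))) ->
        quasilinear_on q (span2 x y)) /\
     (~ (nu_lt (b x y ^+ 2) (pinv * (q x * q y)) \/
         (in_eR (q x) /\ in_eR (q y) /\
          nu_eq (b x y ^+ 2) (pinv * (q x * q y)))) ->
        nu_rigid_at q x y) /\
     (nu_lt (pinv * (q x * q y)) (b x y ^+ 2) -> rigid_at q x y)).
Proof.
move=> TS ntriv qb; have ST := TS.1.
split=> [dense|c0 pi pinv dc0 _ _ e_pinv].
  split; first split.
  - move=> ql; apply: NNPP => /(dominant_of_dense ST TS dense ntriv) [al dom].
    exact: (not_quasilinear_of_dominant ST qb dom ql).
  - exact: (quasilinear_of_nu_le ST TS qb).
  - move=> /(dominant_of_dense ST TS dense ntriv) [al dom].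
    exact: (rigid_at_of_dominant ST TS qb dom).
have nu_pinv z : sr_e R * (pinv * z) = c0 * (sr_e R * z).
  by rewrite mulrA e_pinv mulrA (ghost_mulre (ghostnz_ghost ST dc0.1)).
rewrite /nu_lt /nu_eq !nu_pinv; split; [|split].
- case=> [lt_bQ|[/(in_eR_ghost ST) gx [/(in_eR_ghost ST) gy bd]]].
    apply: (quasilinear_of_nu_le ST TS qb).
    exact: (discrete_le_of_lt ST TS dc0 (ghost_nu ST _) (ghost_nu ST _) lt_bQ).
  exact: (quasilinear_of_ghost_boundary ST TS qb dc0 gx gy bd).
- move=> not_cases; apply: (nu_rigid_at_discrete ST TS qb dc0) => case_holds;
    by apply: not_cases; auto.
- exact: (rigid_at_of_nu_gap ST TS qb dc0.1 dc0.2.1).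
Qed.
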